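(* Let $j^\star=\left\lfloor-\frac{\log(1-\lambda)}{\log(\lambda d+1)}\right\rfloor$ and assume $I>j^\star$. There exists a unique fixed point $x^\star$. It satisfies $x^\star_{\cdot,j^\star}+x^\star_{\cdot,j^\star+1}=1$ (so $x^\star_{i,j}=0$ whenever $j\notin\{j^\star,j^\star+1\}$), and $$\lambda d\,x^\star_{0,j^\star}=(1+\lambda d)(1-\lambda)-\frac{1}{(1+\lambda d)^{j^\star}},\qquad x^\star_{0,j^\star}+x^\star_{0,j^\star+1}=1-\lambda.$$
   Context: Fix $\lambda\in(0,1)$, an integer $d\ge2$ and an integer $I>1$. $\mathcal S=\{x=(x_{i,j})_{0\le i\le j\le I}: x_{i,j}\ge0,\ \sum_{i=0}^I\sum_{j=i}^I x_{i,j}=1\}$; $x_{i,\cdot}=\sum_{j=i}^I x_{i,j}$, $x_{\cdot,j}=\sum_{i=0}^j x_{i,j}$. For $0\le j\le I$: $\mathcal R_j(x)=\max\{0,\lambda(1-d\sum_{i=0}^j(j+1-i)x_{i,\cdot})\}\,\mathbf 1\{\sum_{i=0}^j x_{\cdot,i}=0\}$, $\mathcal G_j(x)=\lambda d\,\mathbf 1\{\sum_{i=0}^j x_{\cdot,i}=0,\ d\sum_{i=0}^j(j+1-i)x_{i,\cdot}\le1\}\sum_{i=0}^j x_{i,\cdot}$. Write $\rho_k^{a,b}(x)=\mathcal R_k(x)\frac{x_{a,b}}{x_{\cdot,b}}\mathbf 1\{x_{\cdot,b}>0\}$ (equal to $0$ when $x_{\cdot,b}=0$). The drift $b(x)$ is: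 $b_{0,0}=\lambda d(x_{0,\cdot}-x_{0,0})-\lambda+\mathcal R_0(x)$; for $i<j$: $b_{i,j}=x_{i+1,j}-\mathbf 1\{i>0\}x_{i,j}-\lambda d x_{i,j}-\rho_{j-1}^{i,j}+\mathbf 1\{i>0\}\rho_{j-2}^{i-1,j-1}+\mathbf 1\{j=I,i>0\}\rho_{I-1}^{i-1,I}$; $b_{1,1}=-x_{1,1}+\lambda d(x_{1,\cdot}-x_{1,1})+\lambda-\mathcal R_0(x)-\rho_0^{1,1}-\mathcal G_1(x)$; for $2\le i\le I-1$: $b_{i,i}=-x_{i,i}+\lambda d(x_{i,\cdot}-x_{i,i})-\rho_{i-1}^{i,i}+\rho_{i-2}^{i-1,i-1}+\mathcal G_{i-1}(x)-\mathcal G_i(x)$; $b_{I,I}=-x_{I,I}+\rho_{I-2}^{I-1,I-1}+\mathcal G_{I-1}(x)+\rho_{I-1}^{I-1,I}$. A fluid solution is an absolutely continuous $x:\mathbb R_+\to\mathcal S$ with $\dot x_{i,j}(t)=b_{i,j}(x(t))$ for a.e. $t$ and all $i\le j$. A fixed point is a fluid solution with $b(x(t))=0$ for all $t\ge0$ (hence constant, identified with a point of $\mathcal S$). *)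

From Stdlib Require Import Reals Lra Lia ZArith Arith List Bool.
Open Scope bool_scope.
Open Scope R_scope.

(* A state x is represented as a function nat -> nat -> R; only the entries
   x i j with 0 <= i <= j <= I are meaningful. *)
Definition state := nat -> nat -> R.

(* rsum m n f = sum_{k=m}^{n} f k  (empty, i.e. 0, if m > n) *)
Definition rsum (m n : nat) (f : nat -> R) : R :=
  fold_right Rplus 0 (map f (seq m (S n - m))).

Definition ind (b : bool) : R := if b then 1 else 0.
Definition is0 (r : R) : bool := if Req_dec_T r 0 then true else false.
Definition isle (r s : R) : bool := if Rle_dec r s then true else false.
Definition ispos (r : R) : bool := if Rlt_dec 0 r then true else false.

Section Model.
Variables (lam : R) (d I : nat) (x : state).
Let dR := INR d.

Definition row (i : nat) : R := rsum i I (fun j => x i j).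
Definition col (j : nat) : R := rsum 0 j (fun i => x i j).

Definition wsum (j : nat) : R := rsum 0 j (fun i => INR (j + 1 - i)%nat * row i).
Definition csum (j : nat) : R := rsum 0 j (fun i => col i).

Definition Rj (j : nat) : R :=
  Rmax 0 (lam * (1 - dR * wsum j)) * ind (is0 (csum j)).

Definition Gj (j : nat) : R :=
  lam * dR * ind (is0 (csum j) && isle (dR * wsum j) 1) * rsum 0 j row.

Definition rho (k a b : nat) : R :=
  if ispos (col b) then Rj k * x a b / col b else 0.

Definition drift (i j : nat) : R :=
  if (i =? 0)%nat && (j =? 0)%nat then
    lam * dR * (row 0%nat - x 0%nat 0%nat) - lam + Rj 0%nat
  else if (Nat.ltb i j) then
    x (S i) j - ind (Nat.ltb 0 i) * x i j - lam * dR * x i j - rho (j - 1)%nat i j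
    + ind (Nat.ltb 0 i) * rho (j - 2)%nat (i - 1)%nat (j - 1)%nat
    + ind ((j =? I)%nat && Nat.ltb 0 i) * rho (I - 1)%nat (i - 1)%nat I
  else if (i =? 1)%nat && (j =? 1)%nat then
    - x 1%nat 1%nat + lam * dR * (row 1%nat - x 1%nat 1%nat) + lam - Rj 0%nat
    - rho 0%nat 1%nat 1%nat - Gj 1%nat
  else if (i =? j)%nat && (2 <=? i)%nat && (i <=? I - 1)%nat then
    - x i i + lam * dR * (row i - x i i) - rho (i - 1)%nat i i
    + rho (i - 2)%nat (i - 1)%nat (i - 1)%nat + Gj (i - 1)%nat - Gj i
  else if (i =? I)%nat && (j =? I)%nat then
    - x I I + rho (I - 2)%nat (I - 1)%nat (I - 1)%nat + Gj (I - 1)%nat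
    + rho (I - 1)%nat (I - 1)%nat I
  else 0.

Definition InS : Prop :=
  (forall i j : nat, (i <= j <= I)%nat -> 0 <= x i j) /\
  rsum 0 I (fun i => rsum i I (fun j => x i j)) = 1.

(* x is a fixed point: x in S and b(x) = 0 (a constant fluid solution). *)
Definition fixed_point : Prop :=
  InS /\ forall i j : nat, (i <= j <= I)%nat -> drift i j = 0.
End Model.

Definition jstar (lam : R) (d : nat) : nat :=
  Z.to_nat (Int_part (- ln (1 - lam) / ln (lam * INR d + 1))).

(* Write a = lam d and let m be the leftmost column of a fixed point x that carries mass.
   Then R_j = G_j = 0 for j >= m, the drift equations force every column beyond m + 1 to
   vanish, and the columns u = x_(.,m), v = x_(.,m+1) obey the linear recurrences
   u_(i+1) = (1 + a + r) u_i and v_(i+1) = (1 + a) v_i - r u_(i-1), with r = R_(m-1) / x_(.,m).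
   Summing them, the total mass and the equation defining R_(m-1) yield
   x_(0,m) + x_(0,m+1) = 1 - lam and (1 + a)^m (x_(0,m) + (1 + a) x_(0,m+1)) = 1, which force
   (1 + a)^m (1 - lam) <= 1 < (1 + a)^(m+1) (1 - lam), i.e. m = j*; the case m = I is excluded
   because there the whole mass sits in column I and (1 + a)^I (1 - lam) <= 1. The two equations
   determine x_(0,m) and x_(0,m+1), the diagonal balance x_(m+1,m+1) = r x_(m,m) determines r
   (both sides being expressed through x_(0,m), x_(0,m+1), its left side increases with r), and
   the recurrences determine the rest. Conversely, these formulas,
   with r given by the intermediate value theorem, define a fixed point. *)

From Stdlib Require Import Reals Lra Lia ZArith List Bool Classical Wf_nat.
Open Scope R_scope.

Lemma rsum_nil m n f : (n < m)%nat -> rsum m n f = 0.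
Proof. intros H. unfold rsum. replace (S n - m)%nat with 0%nat by lia. reflexivity. Qed.

Lemma rsum_cons m n f : (m <= n)%nat -> rsum m n f = f m + rsum (S m) n f.
Proof.
  intros H. unfold rsum. replace (S n - m)%nat with (S (S n - S m)) by lia. reflexivity.
Qed.

Lemma rsum_single m f : rsum m m f = f m.
Proof. rewrite rsum_cons, rsum_nil by lia. ring. Qed.

Lemma rsum_last m n f : (m <= S n)%nat -> rsum m (S n) f = rsum m n f + f (S n).
Proof.
  intros H. remember (S n - m)%nat as k eqn:Hk. revert m H Hk.
  induction k as [|k IH]; intros m H Hk; destruct (Nat.eq_dec m (S n)) as [->|Hne]; try lia.
  - rewrite rsum_single, rsum_nil by lia. ring.
  - rewrite rsum_cons, (rsum_cons m n), IH by lia. ring.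
Qed.

Lemma rsum_ext m n f g :
  (forall k, (m <= k <= n)%nat -> f k = g k) -> rsum m n f = rsum m n g.
Proof.
  intros H. unfold rsum. f_equal. apply map_ext_in. intros k Hk.
  apply in_seq in Hk. apply H. lia.
Qed.

Lemma rsum_plus m n f g : rsum m n (fun k => f k + g k) = rsum m n f + rsum m n g.
Proof.
  induction n as [|n IH].
  - destruct m; [rewrite !rsum_single | rewrite !rsum_nil by lia]; ring.
  - destruct (le_lt_dec m (S n)); [rewrite !rsum_last, IH by lia | rewrite !rsum_nil by lia];
      ring.
Qed.

Lemma rsum_nonneg m n f : (forall k, (m <= k <= n)%nat -> 0 <= f k) -> 0 <= rsum m n f.
Proof.
  induction n as [|n IH]; intros H.
  - destruct m; [rewrite rsum_single; apply H; lia | rewrite rsum_nil by lia; lra].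
  - destruct (le_lt_dec m (S n)); [rewrite rsum_last by lia | rewrite rsum_nil by lia; lra].
    assert (0 <= f (S n)) by (apply H; lia).
    assert (0 <= rsum m n f) by (apply IH; intros; apply H; lia). lra.
Qed.

Lemma rsum_eq_0 m n f : (forall k, (m <= k <= n)%nat -> f k = 0) -> rsum m n f = 0.
Proof.
  intros H. rewrite (rsum_ext m n f (fun _ => 0)) by exact H.
  pose proof (rsum_plus m n (fun _ => 0) (fun _ => 0)) as E. cbv beta in E.
  rewrite (rsum_ext m n (fun _ => 0 + 0) (fun _ => 0)) in E by (intros; ring). lra.
Qed.

Lemma rsum_ge_term m n f p :
  (forall k, (m <= k <= n)%nat -> 0 <= f k) -> (m <= p <= n)%nat -> f p <= rsum m n f.
Proof.
  induction n as [|n IH]; intros H Hp.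
  - assert (m = 0 /\ p = 0)%nat as [-> ->] by lia. rewrite rsum_single. lra.
  - rewrite rsum_last by lia. destruct (Nat.eq_dec p (S n)) as [->|].
    + assert (0 <= rsum m n f) by (apply rsum_nonneg; intros; apply H; lia). lra.
    + assert (f p <= rsum m n f) by (apply IH; [intros; apply H; lia | lia]).
      assert (0 <= f (S n)) by (apply H; lia). lra.
Qed.

Lemma rsum_eq_0_inv m n f :
  (forall k, (m <= k <= n)%nat -> 0 <= f k) -> rsum m n f = 0 ->
  forall k, (m <= k <= n)%nat -> f k = 0.
Proof.
  intros H Hs k Hk. pose proof (rsum_ge_term m n f k H Hk). pose proof (H k Hk). lra.
Qed.

Lemma rsum_trunc n K f :
  (K <= n)%nat -> (forall k, (K < k <= n)%nat -> f k = 0) -> rsum 0 n f = rsum 0 K f.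
Proof.
  induction n as [|n IH]; intros HK Hz; [replace K with 0%nat by lia; reflexivity|].
  destruct (Nat.eq_dec K (S n)) as [->|]; [reflexivity|].
  rewrite rsum_last, Hz, IH by (try lia; intros; apply Hz; lia). ring.
Qed.

Lemma rsum_delta m n p c : (m <= p <= n)%nat ->
  rsum m n (fun k => if (k =? p)%nat then c else 0) = c.
Proof.
  induction n as [|n IH]; intros Hp.
  - replace m with 0%nat by lia. replace p with 0%nat by lia. apply rsum_single.
  - rewrite rsum_last by lia. destruct (Nat.eq_dec p (S n)) as [->|Hne].
    + rewrite Nat.eqb_refl, rsum_eq_0; [ring|].
      intros k Hk. rewrite (proj2 (Nat.eqb_neq k (S n))) by lia. reflexivity.
    + rewrite IH, (proj2 (Nat.eqb_neq (S n) p)) by lia. ring.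
Qed.

Lemma rsum_two m n p q f :
  (m <= p)%nat -> (p < q <= n)%nat ->
  (forall k, (m <= k <= n)%nat -> k <> p -> k <> q -> f k = 0) ->
  rsum m n f = f p + f q.
Proof.
  intros Hp Hq Hz.
  rewrite (rsum_ext m n f (fun k => (if (k =? p)%nat then f p else 0)
                                    + (if (k =? q)%nat then f q else 0))).
  - rewrite rsum_plus, !rsum_delta by lia. reflexivity.
  - intros k Hk. destruct (Nat.eqb_spec k p), (Nat.eqb_spec k q); subst; try lia; try ring.
    rewrite Hz by auto. ring.
Qed.

Lemma is0_true r : r = 0 -> is0 r = true.
Proof. intros ->. unfold is0. destruct (Req_dec_T 0 0); congruence. Qed.

Lemma is0_false r : r <> 0 -> is0 r = false.
Proof. intros H. unfold is0. destruct (Req_dec_T r 0); congruence. Qed.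

Lemma isle_true r s : r <= s -> isle r s = true.
Proof. intros H. unfold isle. destruct (Rle_dec r s); auto; lra. Qed.

Lemma lam_d_pos lam d : 0 < lam -> (0 < d)%nat -> 0 < lam * INR d.
Proof.
  intros Hlam Hd. apply Rmult_lt_0_compat; [exact Hlam|]. apply lt_0_INR. lia.
Qed.

Section Drift.
Variables (lam : R) (d I : nat) (x : state).

Lemma Rj_nonneg j : 0 <= Rj lam d I x j.
Proof.
  unfold Rj. apply Rmult_le_pos; [apply Rmax_l|].
  destruct (is0 (csum x j)); simpl; lra.
Qed.

Lemma Rj_csum_neq0 j : csum x j <> 0 -> Rj lam d I x j = 0.
Proof. intros H. unfold Rj. rewrite is0_false by exact H. simpl. ring. Qed.

Lemma Gj_csum_neq0 j : csum x j <> 0 -> Gj lam d I x j = 0.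
Proof. intros H. unfold Gj. rewrite is0_false by exact H. simpl. ring. Qed.

Lemma Rj_csum_0 j : csum x j = 0 -> Rj lam d I x j = Rmax 0 (lam * (1 - INR d * wsum I x j)).
Proof. intros H. unfold Rj. rewrite is0_true by exact H. simpl. ring. Qed.

Lemma Gj_csum_0 j : csum x j = 0 ->
  Gj lam d I x j = lam * INR d * ind (isle (INR d * wsum I x j) 1) * rsum 0 j (row I x).
Proof. intros H. unfold Gj. rewrite is0_true by exact H. reflexivity. Qed.

Lemma rho_Rj_0 k a b : Rj lam d I x k = 0 -> rho lam d I x k a b = 0.
Proof. intros H. unfold rho. rewrite H. destruct (ispos (col x b)); lra. Qed.

Lemma rho_col_0 k a b : col x b = 0 -> rho lam d I x k a b = 0.
Proof.
  intros H. unfold rho, ispos. rewrite H. destruct (Rlt_dec 0 0); [lra | reflexivity].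
Qed.

Lemma rho_col_pos k a b : 0 < col x b -> rho lam d I x k a b = Rj lam d I x k * x a b / col x b.
Proof. intros H. unfold rho, ispos. destruct (Rlt_dec 0 (col x b)); [reflexivity | lra]. Qed.

Lemma drift_00 :
  drift lam d I x 0 0 = lam * INR d * (row I x 0 - x 0%nat 0%nat) - lam + Rj lam d I x 0.
Proof. reflexivity. Qed.

Lemma drift_lt i j : (i < j)%nat -> drift lam d I x i j =
    x (S i) j - ind (0 <? i)%nat * x i j - lam * INR d * x i j - rho lam d I x (j - 1) i j
    + ind (0 <? i)%nat * rho lam d I x (j - 2) (i - 1) (j - 1)
    + ind ((j =? I) && (0 <? i))%nat * rho lam d I x (I - 1) (i - 1) I.
Proof.
  intros H. unfold drift. destruct j; [lia|].
  replace ((i =? 0)%nat && (S j =? 0)%nat) with false by (destruct (i =? 0)%nat; reflexivity).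
  rewrite (proj2 (Nat.ltb_lt i (S j)) H). reflexivity.
Qed.

Lemma drift_11 : drift lam d I x 1 1 =
    - x 1%nat 1%nat + lam * INR d * (row I x 1 - x 1%nat 1%nat) + lam - Rj lam d I x 0
    - rho lam d I x 0 1 1 - Gj lam d I x 1.
Proof. reflexivity. Qed.

Lemma drift_diag i : (2 <= i <= I - 1)%nat -> drift lam d I x i i =
    - x i i + lam * INR d * (row I x i - x i i) - rho lam d I x (i - 1) i i
    + rho lam d I x (i - 2) (i - 1) (i - 1) + Gj lam d I x (i - 1) - Gj lam d I x i.
Proof.
  intros H. unfold drift. destruct i as [|[|i]]; try lia.
  rewrite Nat.ltb_irrefl, Nat.eqb_refl, (proj2 (Nat.leb_le _ _) (proj2 H)). reflexivity.
Qed.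

Lemma drift_II : (2 <= I)%nat -> drift lam d I x I I =
    - x I I + rho lam d I x (I - 2) (I - 1) (I - 1) + Gj lam d I x (I - 1)
    + rho lam d I x (I - 1) (I - 1) I.
Proof.
  intros H. unfold drift. destruct I as [|[|J]]; try lia.
  rewrite Nat.ltb_irrefl, Nat.eqb_refl.
  replace (S (S J) <=? S (S J) - 1)%nat with false by (symmetry; apply Nat.leb_gt; lia).
  reflexivity.
Qed.
End Drift.

(** * Linear recurrences of the occupied columns *)

Lemma weighted_rsum_succ (p : nat -> R) k :
  rsum 0 (S k) (fun i => INR (S k + 1 - i) * p i) =
  rsum 0 k (fun i => INR (k + 1 - i) * p i) + rsum 0 (S k) p.
Proof.
  rewrite !rsum_last by lia.
  replace (S k + 1 - S k)%nat with 1%nat by lia.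
  rewrite (rsum_ext 0 k (fun i => INR (S k + 1 - i) * p i) (fun i => INR (k + 1 - i) * p i + p i)).
  - rewrite rsum_plus. simpl. ring.
  - intros i Hi. replace (S k + 1 - i)%nat with (S (k + 1 - i)) by lia. rewrite S_INR. ring.
Qed.

(* [u] and [v] model columns [m] and [m + 1] of a fixed point whose leftmost occupied column
   is [m]; row [i] of column [m] feeds row [i + 1] of column [m + 1] at rate [r]. *)
Section Recurrences.
Variables (a r : R) (u v : nat -> R) (m : nat).
Hypothesis u_1 : u 1%nat = (a + r) * u 0%nat.
Hypothesis u_S : forall i, (1 <= i <= m - 1)%nat -> u (S i) = (1 + a + r) * u i.
Hypothesis v_1 : v 1%nat = a * v 0%nat.
Hypothesis v_S : forall i, (1 <= i <= m)%nat -> v (S i) = (1 + a) * v i - r * u (i - 1)%nat.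

Lemma u_succ_rsum k : (k <= m - 1)%nat -> u (S k) = (a + r) * rsum 0 k u.
Proof.
  induction k as [|k IH]; intros Hk; [rewrite rsum_single; exact u_1|].
  rewrite u_S, rsum_last, IH by lia. ring.
Qed.

Lemma rsum_u_pow k : (k <= m)%nat -> rsum 0 k u = (1 + a + r) ^ k * u 0%nat.
Proof.
  induction k as [|k IH]; intros Hk; [rewrite rsum_single; simpl; ring|].
  rewrite rsum_last, u_succ_rsum, IH by lia. simpl. ring.
Qed.

Lemma v_succ_rsum k : (1 <= k <= m)%nat -> v (S k) = a * rsum 0 k v - r * rsum 0 (k - 1) u.
Proof.
  induction k as [|k IH]; intros Hk; [lia|].
  destruct (Nat.eq_dec k 0) as [->|Hk0].
  - rewrite v_S by lia. rewrite rsum_last, !rsum_single, v_1 by lia. simpl. ring.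
  - rewrite v_S by lia. replace (S k - 1)%nat with (S (k - 1)) by lia.
    rewrite (rsum_last 0 k v), (rsum_last 0 (k - 1) u), IH by lia.
    replace (S (k - 1)) with k by lia. ring.
Qed.

Lemma rsum_u_v_pow k : (k <= m)%nat ->
  rsum 0 k u + rsum 0 (S k) v = (1 + a) ^ k * (u 0%nat + (1 + a) * v 0%nat).
Proof.
  induction k as [|k IH]; intros Hk.
  - rewrite rsum_single, rsum_last, rsum_single, v_1 by lia. simpl. ring.
  - rewrite (rsum_last 0 k u), (rsum_last 0 (S k) v), v_succ_rsum, u_succ_rsum by lia.
    replace (S k - 1)%nat with k by lia.
    transitivity ((1 + a) * (rsum 0 k u + rsum 0 (S k) v)); [ring|].
    rewrite IH by lia. simpl. ring.
Qed.

Lemma v_succ_add_u k : (1 <= k <= m)%nat ->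
  v (S k) + u k = a * (1 + a) ^ (k - 1) * (u 0%nat + (1 + a) * v 0%nat).
Proof.
  induction k as [|k IH]; intros Hk; [lia|].
  destruct (Nat.eq_dec k 0) as [->|Hk0].
  - rewrite v_S, v_1, u_1 by lia. simpl. ring.
  - rewrite v_S, u_S by lia. replace (S k - 1)%nat with k by lia.
    transitivity ((1 + a) * (v (S k) + u k)); [ring|].
    rewrite IH by lia. replace k with (S (k - 1)) at 2 by lia. simpl. ring.
Qed.

Lemma weighted_rsum_u_v (p : nat -> R) k :
  (forall i, (i <= m)%nat -> p i = u i + v i) -> (k <= m - 1)%nat ->
  a * rsum 0 k (fun i => INR (k + 1 - i) * p i) =
  rsum 0 (S k) u + rsum 0 (S k) v - u 0%nat - v 0%nat - r * rsum 0 k u.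
Proof.
  intros Hp. induction k as [|k IH]; intros Hk.
  - rewrite !rsum_single, !rsum_last, !rsum_single, Hp, u_1, v_1 by lia. simpl. ring.
  - rewrite weighted_rsum_succ, Rmult_plus_distr_l, IH by lia.
    rewrite (rsum_ext 0 (S k) p (fun i => u i + v i)) by (intros; apply Hp; lia).
    rewrite rsum_plus, (rsum_last 0 (S k) u), (rsum_last 0 (S k) v) by lia.
    rewrite u_succ_rsum, v_succ_rsum by lia. replace (S k - 1)%nat with k by lia.
    rewrite (rsum_last 0 k u) by lia. ring.
Qed.
End Recurrences.

Fixpoint useq (a r u0 : R) (i : nat) : R :=
  match i with
  | O => u0
  | S O => (a + r) * u0
  | S ((S _) as k) => (1 + a + r) * useq a r u0 k
  end.

Fixpoint vseq (a r u0 v0 : R) (i : nat) : R :=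
  match i with
  | O => v0
  | S O => a * v0
  | S ((S k') as k) => (1 + a) * vseq a r u0 v0 k - r * useq a r u0 k'
  end.

Lemma useq_S a r u0 i : (1 <= i)%nat -> useq a r u0 (S i) = (1 + a + r) * useq a r u0 i.
Proof. intros Hi. destruct i; [lia | reflexivity]. Qed.

Lemma vseq_S a r u0 v0 i : (1 <= i)%nat ->
  vseq a r u0 v0 (S i) = (1 + a) * vseq a r u0 v0 i - r * useq a r u0 (i - 1).
Proof. intros Hi. destruct i; [lia|]. simpl. rewrite Nat.sub_0_r. reflexivity. Qed.

Lemma useq_unique a r (u : nat -> R) m :
  u 1%nat = (a + r) * u 0%nat ->
  (forall i, (1 <= i <= m - 1)%nat -> u (S i) = (1 + a + r) * u i) ->
  forall i, (i <= m)%nat -> u i = useq a r (u 0%nat) i.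
Proof.
  intros H1 HS. induction i as [|i IH]; intros Hi; [reflexivity|].
  destruct i; [exact H1|].
  rewrite HS, IH by lia. reflexivity.
Qed.

Lemma vseq_unique a r (u v : nat -> R) m :
  v 1%nat = a * v 0%nat ->
  (forall i, (1 <= i <= m)%nat -> v (S i) = (1 + a) * v i - r * u (i - 1)%nat) ->
  (forall i, (i <= m)%nat -> u i = useq a r (u 0%nat) i) ->
  forall i, (i <= S m)%nat -> v i = vseq a r (u 0%nat) (v 0%nat) i.
Proof.
  intros H1 HS Hu. induction i as [|i IH]; intros Hi; [reflexivity|].
  destruct i; [exact H1|].
  rewrite HS, IH by lia. replace (S i - 1)%nat with i by lia. rewrite (Hu i) by lia.
  reflexivity.
Qed.

(* With [u = useq a r u0], the left side is [(1 + r) u_m]; by [v_succ_add_u] the equation says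
   [v_(m+1) = r u_m], the balance of the diagonal entry [x_(m+1,m+1)]. *)
Definition rate_balance (a u0 v0 : R) (m : nat) (r : R) : Prop :=
  (1 + r) * ((a + r) * (1 + a + r) ^ (m - 1) * u0) = a * (1 + a) ^ (m - 1) * (u0 + (1 + a) * v0).

Lemma rate_balance_unique a u0 v0 m r1 r2 : 0 < a -> 0 < u0 -> 0 <= r1 -> 0 <= r2 ->
  rate_balance a u0 v0 m r1 -> rate_balance a u0 v0 m r2 -> r1 = r2.
Proof.
  intros Ha Hu H1 H2. unfold rate_balance. intros E1 E2.
  set (g r := (1 + r) * (a + r) * (1 + a + r) ^ (m - 1) * u0).
  assert (Hg_incr : forall p q, 0 <= p < q -> g p < g q).
  { intros p q [Hp Hpq]. unfold g.
    assert ((1 + a + p) ^ (m - 1) <= (1 + a + q) ^ (m - 1)) by (apply pow_incr; lra).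
    assert (0 < (1 + a + p) ^ (m - 1)) by (apply pow_lt; lra).
    assert ((1 + p) * (a + p) < (1 + q) * (a + q)) by nra.
    apply Rmult_lt_compat_r; [exact Hu|].
    apply (Rlt_le_trans _ ((1 + q) * (a + q) * (1 + a + p) ^ (m - 1))).
    - apply Rmult_lt_compat_r; assumption.
    - apply Rmult_le_compat_l; nra. }
  assert (Hg : g r1 = g r2) by (unfold g; lra).
  destruct (Rtotal_order r1 r2) as [Hlt|[Heq|Hgt]]; [|exact Heq|].
  - pose proof (Hg_incr r1 r2 (conj H1 Hlt)). lra.
  - pose proof (Hg_incr r2 r1 (conj H2 Hgt)). lra.
Qed.

Lemma rate_balance_solvable a u0 v0 m : 0 < a -> 0 < u0 -> 0 <= v0 ->
  exists r, 0 <= r /\ rate_balance a u0 v0 m r.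
Proof.
  intros Ha Hu Hv. unfold rate_balance.
  set (T := a * (1 + a) ^ (m - 1) * (u0 + (1 + a) * v0)).
  set (f r := (1 + r) * ((a + r) * (1 + a + r) ^ (m - 1) * u0) - T).
  assert (Hpow : 0 < (1 + a) ^ (m - 1)) by (apply pow_lt; lra).
  assert (HT : 0 <= T) by (unfold T; apply Rmult_le_pos; nra).
  set (r1 := T / (a * u0)).
  assert (Hr1 : r1 * (a * u0) = T) by (unfold r1; field; nra).
  assert (Hr1_nonneg : 0 <= r1)
    by (unfold r1; apply Rmult_le_pos; [exact HT | left; apply Rinv_0_lt_compat; nra]).
  assert (Hf0 : f 0 <= 0).
  { unfold f, T. rewrite !Rplus_0_r.
    assert (0 <= a * (1 + a) ^ (m - 1) * ((1 + a) * v0))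
      by (apply Rmult_le_pos; [apply Rmult_le_pos|]; nra).
    nra. }
  assert (Hf1 : 0 <= f r1).
  { unfold f. assert (1 <= (1 + a + r1) ^ (m - 1)) by (apply pow_R1_Rle; lra).
    assert (HX : a * u0 <= (a + r1) * (1 + a + r1) ^ (m - 1) * u0).
    { apply (Rle_trans _ ((a + r1) * u0 * 1)); [nra|].
      replace ((a + r1) * (1 + a + r1) ^ (m - 1) * u0) with ((a + r1) * u0 * (1 + a + r1) ^ (m - 1))
        by ring.
      apply Rmult_le_compat_l; nra. }
    rewrite <- Hr1. nra. }
  destruct (IVT_cor f 0 r1 ltac:(unfold f; reg) Hr1_nonneg ltac:(nra)) as [r [Hr Hfr]].
  exists r. split; [lra|]. unfold f in Hfr. lra.
Qed.

(** * The threshold index *)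

Definition threshold (lam : R) (d n : nat) : Prop :=
  (1 + lam * INR d) ^ n * (1 - lam) <= 1 < (1 + lam * INR d) ^ S n * (1 - lam).

Lemma threshold_of_row0 lam d m u0 v0 : 0 < lam * INR d -> 0 < u0 -> 0 <= v0 ->
  u0 + v0 = 1 - lam -> (1 + lam * INR d) ^ m * (u0 + (1 + lam * INR d) * v0) = 1 ->
  threshold lam d m.
Proof.
  intros Ha Hu0 Hv0 Hsum Hpow. set (a := lam * INR d) in *.
  assert (0 < (1 + a) ^ m) by (apply pow_lt; lra).
  assert (0 <= (1 + a) ^ m * (a * v0)) by (apply Rmult_le_pos; nra).
  assert (0 < (1 + a) ^ m * (a * u0)) by (apply Rmult_lt_0_compat; nra).
  unfold threshold. fold a. simpl. rewrite <- Hsum. split; nra.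
Qed.

Lemma threshold_pow_gt lam d n k : 0 < lam < 1 -> (0 < d)%nat -> threshold lam d n ->
  (S n <= k)%nat -> 1 < (1 + lam * INR d) ^ k * (1 - lam).
Proof.
  intros Hlam Hd [_ Hn] Hk. pose proof (lam_d_pos lam d (proj1 Hlam) Hd).
  assert ((1 + lam * INR d) ^ S n <= (1 + lam * INR d) ^ k) by (apply Rle_pow; lra || lia).
  assert ((1 + lam * INR d) ^ S n * (1 - lam) <= (1 + lam * INR d) ^ k * (1 - lam))
    by (apply Rmult_le_compat_r; lra).
  lra.
Qed.

Lemma threshold_unique lam d n n' :
  0 < lam < 1 -> (0 < d)%nat -> threshold lam d n -> threshold lam d n' -> n = n'.
Proof.
  intros Hlam Hd.
  assert (Hlt : forall p q, (p < q)%nat -> threshold lam d p -> threshold lam d q -> False).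
  { intros p q Hpq Hp [Hq _]. pose proof (threshold_pow_gt lam d p q Hlam Hd Hp Hpq). lra. }
  intros Hn Hn'. destruct (lt_eq_lt_dec n n') as [[H|H]|H]; [|exact H|];
    exfalso; eapply Hlt; eauto.
Qed.

Lemma jstar_threshold lam d : 0 < lam < 1 -> (0 < d)%nat -> threshold lam d (jstar lam d).
Proof.
  intros Hlam Hd. pose proof (lam_d_pos lam d (proj1 Hlam) Hd) as Ha.
  set (a := lam * INR d) in *.
  assert (HL : 0 < ln (a + 1)) by (rewrite <- ln_1; apply ln_increasing; lra).
  assert (Hl1 : ln (1 - lam) < 0) by (rewrite <- ln_1; apply ln_increasing; lra).
  set (t := - ln (1 - lam) / ln (a + 1)).
  assert (Htl : t * ln (a + 1) = - ln (1 - lam)) by (unfold t; field; lra).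
  destruct (base_Int_part t) as [Hfl1 Hfl2].
  assert (Hz : (0 <= Int_part t)%Z).
  { assert (0 < t) by (unfold t; apply Rdiv_lt_0_compat; lra).
    assert (IZR (-1) < IZR (Int_part t)) by (simpl; lra). apply lt_IZR in H0. lia. }
  assert (HJ : INR (jstar lam d) = IZR (Int_part t)).
  { unfold jstar. fold a t. rewrite INR_IZR_INZ, Z2Nat.id by exact Hz. reflexivity. }
  assert (Hexp : forall n, (1 + a) ^ n * (1 - lam) = exp (INR n * ln (a + 1) + ln (1 - lam))).
  { intros n. rewrite exp_plus, exp_ln by lra. rewrite <- ln_pow, exp_ln by (try apply pow_lt; lra).
    replace (a + 1) with (1 + a) by ring. reflexivity. }
  unfold threshold. fold a. rewrite !Hexp. split.
  - apply (Rle_trans _ (exp 0)); [|rewrite exp_0; lra].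
    assert (IZR (Int_part t) * ln (a + 1) <= t * ln (a + 1)) by (apply Rmult_le_compat_r; lra).
    assert (Hq : INR (jstar lam d) * ln (a + 1) + ln (1 - lam) <= 0) by (rewrite HJ; lra).
    destruct (Rle_lt_or_eq_dec _ _ Hq) as [Hq'|Hq'];
      [left; apply exp_increasing, Hq' | right; rewrite Hq'; reflexivity].
  - apply (Rle_lt_trans _ (exp 0)); [rewrite exp_0; lra|].
    apply exp_increasing. rewrite S_INR, HJ.
    assert (t * ln (a + 1) < (IZR (Int_part t) + 1) * ln (a + 1)) by (apply Rmult_lt_compat_r; lra).
    lra.
Qed.

Definition v0_star (lam : R) (d J : nat) : R :=
  (1 / (1 + lam * INR d) ^ J - (1 - lam)) / (lam * INR d).
Definition u0_star (lam : R) (d J : nat) : R := 1 - lam - v0_star lam d J.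

Section RowZero.
Variables (lam : R) (d J : nat).
Hypothesis lam_pos : 0 < lam.
Hypothesis d_pos : (0 < d)%nat.
Let d_pos_R : 0 < INR d := lt_0_INR d d_pos.
Let a_pos : 0 < lam * INR d := lam_d_pos lam d lam_pos d_pos.
Local Notation a := (lam * INR d).
Local Notation u0s := (u0_star lam d J).
Local Notation v0s := (v0_star lam d J).

Lemma a_u0_star : a * u0s = (1 + a) * (1 - lam) - 1 / (1 + a) ^ J.
Proof.
  assert (0 < (1 + a) ^ J) by (apply pow_lt; lra).
  unfold u0_star, v0_star. field. repeat split; lra.
Qed.

Lemma row0_star_pow : (1 + a) ^ J * (u0s + (1 + a) * v0s) = 1.
Proof.
  assert (0 < (1 + a) ^ J) by (apply pow_lt; lra).
  unfold u0_star, v0_star. field. repeat split; lra.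
Qed.

Lemma row0_star_unique u0 v0 : u0 + v0 = 1 - lam -> (1 + a) ^ J * (u0 + (1 + a) * v0) = 1 ->
  u0 = u0s /\ v0 = v0s.
Proof.
  intros Hsum Hpow. assert (0 < (1 + a) ^ J) by (apply pow_lt; lra).
  assert (Hv : v0 = v0s).
  { unfold v0_star. apply (Rmult_eq_reg_l (a * (1 + a) ^ J)); [|nra].
    field_simplify; [nra | lra]. }
  split; [unfold u0_star; lra | exact Hv].
Qed.

Lemma row0_star_pos : threshold lam d J -> 0 < u0s /\ 0 <= v0s.
Proof.
  intros [Hle Hlt]. assert (HP : 0 < (1 + a) ^ J) by (apply pow_lt; lra).
  assert (Hinv : (1 + a) ^ J * (1 / (1 + a) ^ J) = 1) by (field; lra).
  split.
  - apply (Rmult_lt_reg_l a); [exact a_pos|]. rewrite Rmult_0_r, a_u0_star.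
    apply (Rmult_lt_reg_l ((1 + a) ^ J)); [exact HP|]. simpl in Hlt. nra.
  - unfold v0_star. apply Rmult_le_pos; [|left; apply Rinv_0_lt_compat, a_pos].
    apply (Rmult_le_reg_l ((1 + a) ^ J)); [exact HP|]. nra.
Qed.
End RowZero.

(** * Fixed points *)

Section TwoColumns.
Variables (I : nat) (y : state) (m : nat).
Hypothesis Sm_le : (S m <= I)%nat.
Hypothesis y_supp : forall i j, (i <= j <= I)%nat -> j <> m -> j <> S m -> y i j = 0.

Lemma row_two_cols i : (i <= m)%nat -> row I y i = y i m + y i (S m).
Proof. intros Hi. apply rsum_two; try lia. intros j Hj. apply y_supp. lia. Qed.

Lemma row_succ_two_cols : row I y (S m) = y (S m) (S m).
Proof.
  unfold row. rewrite rsum_cons, rsum_eq_0 by (try lia; intros j Hj; apply y_supp; lia). ring.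
Qed.

Lemma row_beyond_two_cols k : (S m < k)%nat -> row I y k = 0.
Proof. intros Hk. apply rsum_eq_0. intros j Hj. apply y_supp; lia. Qed.

Lemma mass_two_cols : rsum 0 I (row I y) = col y m + col y (S m).
Proof.
  rewrite (rsum_trunc I (S m)) by (try lia; intros; apply row_beyond_two_cols; lia).
  rewrite rsum_last, row_succ_two_cols by lia.
  rewrite (rsum_ext 0 m (row I y) (fun i => y i m + y i (S m)))
    by (intros; apply row_two_cols; lia).
  unfold col. rewrite rsum_plus, (rsum_last 0 m (fun i => y i (S m))) by lia. ring.
Qed.
End TwoColumns.

Lemma col_nonneg I (y : state) j :
  (forall i j, (i <= j <= I)%nat -> 0 <= y i j) -> (j <= I)%nat -> 0 <= col y j.
Proof. intros Hnn Hj. apply rsum_nonneg. intros. apply Hnn. lia. Qed.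

Lemma row_nonneg I (y : state) i :
  (forall i j, (i <= j <= I)%nat -> 0 <= y i j) -> 0 <= row I y i.
Proof. intros Hnn. apply rsum_nonneg. intros. apply Hnn. lia. Qed.

Lemma leading_col_exists I (y : state) :
  (forall i j, (i <= j <= I)%nat -> 0 <= y i j) -> rsum 0 I (row I y) = 1 ->
  exists m, (m <= I)%nat /\ 0 < col y m /\ forall j, (j < m)%nat -> col y j = 0.
Proof.
  intros Hnn Hmass.
  assert (Hzero : forall j, (j <= I)%nat -> ~ 0 < col y j -> col y j = 0).
  { intros j Hj Hnpos. pose proof (col_nonneg I y j Hnn Hj). lra. }
  destruct (dec_inh_nat_subset_has_unique_least_element (fun j => (j <= I)%nat /\ 0 < col y j))
    as [m [[[Hm Hpos] Hleast] _]].
  - intros j. destruct (le_dec j I), (Rlt_dec 0 (col y j)); tauto.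
  - apply NNPP. intros Hnone. apply R1_neq_R0. rewrite <- Hmass.
    apply rsum_eq_0. intros i Hi. apply rsum_eq_0. intros j Hj.
    apply (rsum_eq_0_inv 0 j (fun i => y i j)); [intros; apply Hnn; lia | | lia].
    apply Hzero; [lia|]. intros Hj'. apply Hnone. exists j. split; [lia | exact Hj'].
  - exists m. repeat split; try assumption. intros j Hj. apply Hzero; [lia|].
    intros Hj'. assert (m <= j)%nat by (apply Hleast; split; [lia | exact Hj']). lia.
Qed.

Lemma wsum_le I (y : state) k k' :
  (forall i j, (i <= j <= I)%nat -> 0 <= y i j) -> (k <= k')%nat -> wsum I y k <= wsum I y k'.
Proof.
  intros Hnn Hk. induction Hk as [|k' Hk IH]; [lra|].
  unfold wsum at 2. rewrite weighted_rsum_succ. fold (wsum I y k').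
  assert (0 <= rsum 0 (S k') (row I y)) by (apply rsum_nonneg; intros; apply (row_nonneg I), Hnn).
  lra.
Qed.

Definition rate (lam : R) (d I : nat) (y : state) (m : nat) : R := Rj lam d I y (m - 1) / col y m.

Definition two_col_state (a r u0 v0 : R) (m : nat) : state := fun i j =>
  if (j =? m)%nat then (if (i <=? m)%nat then useq a r u0 i else 0)
  else if (j =? S m)%nat then (if (i <=? S m)%nat then vseq a r u0 v0 i else 0)
  else 0.

Lemma two_col_state_col_m a r u0 v0 m i : (i <= m)%nat ->
  two_col_state a r u0 v0 m i m = useq a r u0 i.
Proof.
  intros Hi. unfold two_col_state. rewrite Nat.eqb_refl, (proj2 (Nat.leb_le i m) Hi). reflexivity.
Qed.

Lemma two_col_state_col_Sm a r u0 v0 m i : (i <= S m)%nat ->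
  two_col_state a r u0 v0 m i (S m) = vseq a r u0 v0 i.
Proof.
  intros Hi. unfold two_col_state. rewrite (proj2 (Nat.eqb_neq (S m) m)) by lia.
  rewrite Nat.eqb_refl, (proj2 (Nat.leb_le _ _) Hi). reflexivity.
Qed.

Lemma two_col_state_other a r u0 v0 m i j : j <> m -> j <> S m ->
  two_col_state a r u0 v0 m i j = 0.
Proof.
  intros Hm HSm. unfold two_col_state.
  rewrite (proj2 (Nat.eqb_neq j m) Hm), (proj2 (Nat.eqb_neq j (S m)) HSm). reflexivity.
Qed.

(* For [m = 0] the rate never enters: only [useq _ _ _ 0] and [vseq _ _ _ _ i], [i <= 1], occur. *)
Lemma two_col_state_0_rate a r r' u0 v0 i j :
  two_col_state a r u0 v0 0 i j = two_col_state a r' u0 v0 0 i j.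
Proof.
  unfold two_col_state.
  destruct (j =? 0)%nat; [destruct i; reflexivity|].
  destruct (j =? 1)%nat; [destruct i as [|[|i]]|]; reflexivity.
Qed.

Section LeadingColumn.
Variables (lam : R) (d I : nat) (y : state) (m : nat).
Hypothesis y_nonneg : forall i j, (i <= j <= I)%nat -> 0 <= y i j.
Hypothesis m_le : (m <= I)%nat.
Hypothesis col_m_pos : 0 < col y m.
Hypothesis col_lt_m : forall j, (j < m)%nat -> col y j = 0.

Lemma entry_lt_m i j : (i <= j < m)%nat -> y i j = 0.
Proof.
  intros Hij. apply (rsum_eq_0_inv 0 j (fun i => y i j)); [| apply col_lt_m | ]; try lia.
  intros. apply y_nonneg. lia.
Qed.

Lemma csum_lt_m j : (j < m)%nat -> csum y j = 0.
Proof. intros Hj. apply rsum_eq_0. intros. apply col_lt_m. lia. Qed.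

Lemma csum_ge_m j : (m <= j <= I)%nat -> csum y j <> 0.
Proof.
  intros Hj. assert (col y m <= csum y j).
  { apply (rsum_ge_term 0 j (col y)); [intros; apply (col_nonneg I); [exact y_nonneg|]|]; lia. }
  lra.
Qed.

Lemma Rj_ge_m j : (m <= j <= I)%nat -> Rj lam d I y j = 0.
Proof. intros Hj. apply Rj_csum_neq0, csum_ge_m, Hj. Qed.

Lemma Gj_ge_m j : (m <= j <= I)%nat -> Gj lam d I y j = 0.
Proof. intros Hj. apply Gj_csum_neq0, csum_ge_m, Hj. Qed.

Lemma rho_ge_m k a b : (m <= k <= I)%nat -> rho lam d I y k a b = 0.
Proof. intros Hk. apply rho_Rj_0, Rj_ge_m, Hk. Qed.

Lemma rho_lt_m k a b : (b < m)%nat -> rho lam d I y k a b = 0.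
Proof. intros Hb. apply rho_col_0, col_lt_m, Hb. Qed.

Lemma rho_col_m i : rho lam d I y (m - 1) i m = rate lam d I y m * y i m.
Proof. rewrite rho_col_pos by exact col_m_pos. unfold rate. field. lra. Qed.

Lemma rate_nonneg : 0 <= rate lam d I y m.
Proof.
  unfold rate. apply Rmult_le_pos; [apply Rj_nonneg | left; apply Rinv_0_lt_compat, col_m_pos].
Qed.

Section FixedPoint.
Hypothesis lam_range : 0 < lam < 1.
Hypothesis d_pos : (0 < d)%nat.
Hypothesis y_drift : forall i j, (i <= j <= I)%nat -> drift lam d I y i j = 0.
Hypothesis y_mass : rsum 0 I (row I y) = 1.

Let a_pos : 0 < lam * INR d := lam_d_pos lam d (proj1 lam_range) ltac:(lia).
Local Notation a := (lam * INR d).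

Lemma col_zero_of_diag_beyond j : (m + 2 <= j <= I)%nat -> y j j = 0 ->
  forall i, (i <= j)%nat -> y i j = 0.
Proof.
  intros Hj Hjj i Hi. replace i with (j - (j - i))%nat by lia.
  induction (j - i)%nat as [|t IH]; [rewrite Nat.sub_0_r; exact Hjj|].
  destruct (le_lt_dec j t); [replace (j - S t)%nat with (j - t)%nat by lia; exact IH|].
  pose proof (y_drift (j - S t) j ltac:(lia)) as E.
  rewrite drift_lt in E by lia. replace (S (j - S t)) with (j - t)%nat in E by lia.
  rewrite IH, !rho_ge_m in E by lia.
  assert (Hind : 0 <= ind (0 <? j - S t)%nat) by (destruct (0 <? j - S t)%nat; simpl; lra).
  assert (Hz : y (j - S t)%nat j * (ind (0 <? j - S t)%nat + a) = 0) by lra.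
  apply Rmult_integral in Hz. destruct Hz as [Hz|Hz]; [exact Hz | lra].
Qed.

Lemma diag_zero_beyond j : (m + 2 <= j <= I)%nat ->
  (forall k i, (j < k <= I)%nat -> (i <= k)%nat -> y i k = 0) -> y j j = 0.
Proof.
  intros Hj Hlater. pose proof (y_drift j j ltac:(lia)) as E.
  destruct (Nat.eq_dec j I) as [->|Hne].
  - rewrite drift_II, !rho_ge_m, Gj_ge_m in E by lia. lra.
  - rewrite drift_diag, !rho_ge_m, !Gj_ge_m in E by lia.
    assert (Hrow : row I y j = y j j).
    { unfold row. rewrite rsum_cons, rsum_eq_0 by (try lia; intros; apply Hlater; lia). ring. }
    rewrite Hrow in E. lra.
Qed.

Lemma entry_beyond i j : (m + 2 <= j <= I)%nat -> (i <= j)%nat -> y i j = 0.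
Proof.
  remember (I - j)%nat as t eqn:Ht. revert i j Ht.
  induction t as [t IH] using lt_wf_ind. intros i j Ht Hj Hi.
  apply col_zero_of_diag_beyond; [exact Hj | | exact Hi].
  apply diag_zero_beyond; [exact Hj|].
  intros k i' Hk Hi'. apply (IH (I - k)%nat); lia.
Qed.

Lemma fixed_point_supp i j : (i <= j <= I)%nat -> j <> m -> j <> S m -> y i j = 0.
Proof.
  intros Hij Hm Hm'. destruct (le_lt_dec m j).
  - apply entry_beyond; lia.
  - apply entry_lt_m; lia.
Qed.

Lemma Gj_lt_m k : (1 <= k < m)%nat -> Gj lam d I y k = a * rsum 0 k (row I y).
Proof.
  induction k as [|k IH]; intros Hk; [lia|].
  destruct (Nat.eq_dec k 0) as [->|Hk0].
  - pose proof (y_drift 0 0 ltac:(lia)) as E0. pose proof (y_drift 1 1 ltac:(lia)) as E1.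
    rewrite drift_00, (entry_lt_m 0 0) in E0 by lia.
    rewrite drift_11, (entry_lt_m 1 1), rho_lt_m in E1 by lia.
    rewrite rsum_last, rsum_single by lia. lra.
  - pose proof (y_drift (S k) (S k) ltac:(lia)) as E.
    rewrite drift_diag, (entry_lt_m (S k) (S k)), !rho_lt_m in E by lia.
    replace (S k - 1)%nat with k in E by lia. rewrite IH in E by lia.
    rewrite rsum_last by lia. lra.
Qed.

Lemma Rj_pred_m : (1 <= m)%nat -> Rj lam d I y (m - 1) = lam - a * wsum I y (m - 1).
Proof.
  intros Hm1. destruct (Nat.eq_dec m 1) as [Hm|Hm2].
  - pose proof (y_drift 0 0 ltac:(lia)) as E0.
    rewrite drift_00, (entry_lt_m 0 0) in E0 by lia.
    rewrite Hm. unfold wsum. rewrite rsum_single. simpl. lra.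
  - assert (HG := Gj_lt_m (m - 1) ltac:(lia)).
    rewrite Gj_csum_0 in HG by (apply csum_lt_m; lia).
    rewrite Rj_csum_0 by (apply csum_lt_m; lia).
    unfold isle in HG. destruct (Rle_dec (INR d * wsum I y (m - 1)) 1) as [Hle|Hgt].
    + rewrite Rmax_right; nra.
    (* if [d wsum > 1] then [G_(m-1) = 0], so there is no mass before column [m] *)
    + simpl in HG. assert (HP : rsum 0 (m - 1) (row I y) = 0) by nra.
      assert (HW : wsum I y (m - 1) = 0).
      { apply rsum_eq_0. intros k Hk.
        rewrite (rsum_eq_0_inv 0 (m - 1) (row I y)); [ring | | exact HP | lia].
        intros; apply (row_nonneg I), y_nonneg. }
      rewrite HW in Hgt |- *. lra.
Qed.

Section Last.
Hypothesis m_ge_1 : (1 <= m)%nat.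
Hypothesis m_eq_I : m = I.
Local Notation r := (rate lam d I y m).
Local Notation u := (fun i => y i m).

Lemma row_last_col i : (i <= m)%nat -> row I y i = y i m.
Proof.
  intros Hi. unfold row. rewrite <- m_eq_I.
  destruct (Nat.eq_dec i m) as [->|Hne]; [apply rsum_single|].
  replace m with (S (m - 1)) at 1 by lia.
  rewrite rsum_last, rsum_eq_0 by (try lia; intros; apply fixed_point_supp; lia).
  replace (S (m - 1)) with m by lia. ring.
Qed.

Lemma last_col_1 : y 1%nat m = (a + r) * y 0%nat m.
Proof.
  pose proof (y_drift 0 m ltac:(lia)) as E.
  rewrite drift_lt, rho_col_m, andb_false_r in E by lia. simpl in E. lra.
Qed.

(* the mass leaving column [I] through [rho_(I-1)] re-enters it one row lower *)
Lemma last_col_S i : (1 <= i <= m - 1)%nat ->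
  y (S i) m = (1 + a + r) * y i m - r * y (i - 1)%nat m.
Proof.
  intros Hi. pose proof (y_drift i m ltac:(lia)) as E.
  rewrite drift_lt, rho_col_m, (rho_lt_m (m - 2)) in E by lia.
  replace (0 <? i)%nat with true in E by (symmetry; apply Nat.ltb_lt; lia).
  replace (m =? I)%nat with true in E by (symmetry; apply Nat.eqb_eq; lia).
  replace (rho lam d I y (I - 1) (i - 1) I) with (r * y (i - 1)%nat m) in E
    by (rewrite <- rho_col_m, m_eq_I; reflexivity).
  simpl in E. lra.
Qed.

Lemma last_col_succ_rsum k : (k <= m - 1)%nat -> y (S k) m = a * rsum 0 k u + r * y k m.
Proof.
  induction k as [|k IH]; intros Hk; [rewrite rsum_single, last_col_1; ring|].
  rewrite last_col_S, rsum_last, IH by lia. replace (S k - 1)%nat with k by lia. ring.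
Qed.

Lemma last_col_mass : col y m = 1.
Proof.
  rewrite <- y_mass, <- m_eq_I at 1. apply rsum_ext. intros i Hi. symmetry. apply row_last_col. lia.
Qed.

Lemma last_col_weighted k : (k <= m - 1)%nat ->
  a * wsum I y k = rsum 0 (S k) u - y 0%nat m - r * rsum 0 k u.
Proof.
  unfold wsum. induction k as [|k IH]; intros Hk.
  - rewrite !rsum_single, rsum_last, rsum_single, row_last_col, last_col_1 by lia. simpl. ring.
  - rewrite weighted_rsum_succ, Rmult_plus_distr_l, IH by lia.
    rewrite (rsum_ext 0 (S k) (row I y) u) by (intros; apply row_last_col; lia).
    rewrite (rsum_last 0 (S k) u), (last_col_succ_rsum (S k)), (rsum_last 0 k u) by lia. ring.
Qed.

Lemma last_col_row0_ge : 1 - lam <= y 0%nat m.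
Proof.
  pose proof (Rj_pred_m ltac:(lia)) as HR.
  assert (HRr : Rj lam d I y (m - 1) = r * col y m) by (unfold rate; field; lra).
  pose proof (last_col_weighted (m - 1) ltac:(lia)) as HW.
  replace (S (m - 1)) with m in HW by lia. fold (col y m) in HW. rewrite last_col_mass in HRr, HW.
  assert (Hpart : rsum 0 (m - 1) u <= 1).
  { rewrite <- last_col_mass. unfold col. replace m with (S (m - 1)) at 2 by lia.
    rewrite rsum_last by lia. assert (0 <= y (S (m - 1)) m) by (apply y_nonneg; lia). lra. }
  pose proof rate_nonneg.
  assert (r * rsum 0 (m - 1) u <= r) by nra. lra.
Qed.

Lemma last_col_rsum_ge k : (k <= m)%nat -> (1 + a) ^ k * y 0%nat m <= rsum 0 k u.
Proof.
  induction k as [|k IH]; intros Hk; [rewrite rsum_single; simpl; lra|].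
  rewrite rsum_last, last_col_succ_rsum by lia.
  assert (0 <= r * y k m) by (apply Rmult_le_pos; [apply rate_nonneg | apply y_nonneg]; lia).
  assert (0 <= rsum 0 k u) by (apply rsum_nonneg; intros; apply y_nonneg; lia).
  specialize (IH ltac:(lia)). simpl. nra.
Qed.

Lemma fixed_point_last_col : (1 + a) ^ I * (1 - lam) <= 1.
Proof.
  pose proof (last_col_rsum_ge m ltac:(lia)) as Hg. fold (col y m) in Hg.
  rewrite last_col_mass in Hg. rewrite <- m_eq_I.
  assert (0 < (1 + a) ^ m) by (apply pow_lt; lra).
  pose proof last_col_row0_ge. nra.
Qed.
End Last.

Section Inner.
Hypothesis Sm_le : (S m <= I)%nat.

Lemma col_Sm_1 : y 1%nat (S m) = a * y 0%nat (S m).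
Proof.
  pose proof (y_drift 0 (S m) ltac:(lia)) as E.
  rewrite drift_lt, rho_ge_m, andb_false_r in E by lia. simpl in E. lra.
Qed.

Section First.
Hypothesis m_eq_0 : m = 0%nat.

Lemma first_col_row0_sum : y 0%nat 0%nat + y 0%nat 1%nat = 1 - lam.
Proof.
  pose proof (y_drift 0 0 ltac:(lia)) as E0. pose proof (y_drift 1 1 ltac:(lia)) as E1.
  rewrite drift_00, Rj_ge_m, (row_two_cols I y m Sm_le fixed_point_supp), m_eq_0 in E0 by lia.
  rewrite drift_11, !Rj_ge_m, rho_ge_m, Gj_ge_m in E1 by lia.
  pose proof (row_succ_two_cols I y m Sm_le fixed_point_supp) as Hrow1. rewrite m_eq_0 in Hrow1.
  rewrite Hrow1 in E1.
  pose proof (mass_two_cols I y m Sm_le fixed_point_supp) as Hmass. rewrite m_eq_0 in Hmass.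
  unfold col in Hmass. rewrite rsum_single, rsum_last, rsum_single in Hmass by lia. lra.
Qed.

Lemma first_col_row0_pow : y 0%nat 0%nat + (1 + a) * y 0%nat 1%nat = 1.
Proof.
  pose proof col_Sm_1 as Hv1. rewrite m_eq_0 in Hv1.
  pose proof (mass_two_cols I y m Sm_le fixed_point_supp) as Hmass. rewrite m_eq_0 in Hmass.
  unfold col in Hmass. rewrite rsum_single, rsum_last, rsum_single in Hmass by lia. lra.
Qed.
End First.

Section Interior.
Hypothesis m_ge_1 : (1 <= m)%nat.
Local Notation r := (rate lam d I y m).
Local Notation u := (fun i => y i m).
Local Notation v := (fun i => y i (S m)).

Lemma col_m_1 : y 1%nat m = (a + r) * y 0%nat m.
Proof.
  pose proof (y_drift 0 m ltac:(lia)) as E.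
  rewrite drift_lt, rho_col_m, andb_false_r in E by lia. simpl in E. lra.
Qed.

Lemma col_m_S i : (1 <= i <= m - 1)%nat -> y (S i) m = (1 + a + r) * y i m.
Proof.
  intros Hi. pose proof (y_drift i m ltac:(lia)) as E.
  rewrite drift_lt, rho_col_m, (rho_lt_m (m - 2)) in E by lia.
  replace (0 <? i)%nat with true in E by (symmetry; apply Nat.ltb_lt; lia).
  replace (m =? I)%nat with false in E by (symmetry; apply Nat.eqb_neq; lia).
  simpl in E. lra.
Qed.

Lemma col_Sm_S i : (1 <= i <= m)%nat ->
  y (S i) (S m) = (1 + a) * y i (S m) - r * y (i - 1)%nat m.
Proof.
  intros Hi. pose proof (y_drift i (S m) ltac:(lia)) as E.
  rewrite drift_lt, (rho_ge_m (S m - 1)), (rho_ge_m (I - 1)) in E by lia.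
  replace (S m - 2)%nat with (m - 1)%nat in E by lia.
  replace (S m - 1)%nat with m in E by lia.
  rewrite rho_col_m in E.
  replace (0 <? i)%nat with true in E by (symmetry; apply Nat.ltb_lt; lia).
  simpl in E. lra.
Qed.

Lemma col_Sm_diag : y (S m) (S m) = r * y m m.
Proof.
  pose proof (y_drift (S m) (S m) ltac:(lia)) as E.
  destruct (Nat.eq_dec (S m) I) as [HeI|HeI].
  - rewrite HeI in E |- *. rewrite drift_II in E by lia.
    replace (I - 2)%nat with (m - 1)%nat in E by lia. replace (I - 1)%nat with m in E by lia.
    rewrite rho_col_m, Gj_ge_m, (rho_ge_m m) in E by lia. lra.
  - rewrite drift_diag in E by lia.
    rewrite (row_succ_two_cols I y m Sm_le fixed_point_supp) in E.
    replace (S m - 2)%nat with (m - 1)%nat in E by lia. replace (S m - 1)%nat with m in E by lia.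
    rewrite rho_col_m, (rho_ge_m m), !Gj_ge_m in E by lia. lra.
Qed.

Lemma row0_pow_interior : (1 + a) ^ m * (y 0%nat m + (1 + a) * y 0%nat (S m)) = 1.
Proof.
  rewrite <- (rsum_u_v_pow a r u v m col_m_1 col_m_S col_Sm_1 col_Sm_S m) by lia.
  rewrite <- y_mass, (mass_two_cols I y m Sm_le fixed_point_supp). reflexivity.
Qed.

Lemma row0_pos_interior : 0 < y 0%nat m.
Proof.
  pose proof (rsum_u_pow a r u m col_m_1 col_m_S m ltac:(lia)) as Hcol. fold (col y m) in Hcol.
  assert (0 < (1 + a + r) ^ m) by (apply pow_lt; pose proof rate_nonneg; lra).
  destruct (Rlt_le_dec 0 (y 0%nat m)) as [|Hle]; [assumption|]. nra.
Qed.

Lemma rsum_col_m_pred : col y m = rsum 0 (m - 1) u + y m m.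
Proof.
  pose proof (rsum_last 0 (m - 1) u ltac:(lia)) as H.
  replace (S (m - 1)) with m in H by lia. exact H.
Qed.

Lemma row0_sum_interior : y 0%nat m + y 0%nat (S m) = 1 - lam.
Proof.
  pose proof (Rj_pred_m m_ge_1) as HR.
  assert (HRr : Rj lam d I y (m - 1) = r * col y m) by (unfold rate; field; lra).
  pose proof (weighted_rsum_u_v a r u v m col_m_1 col_m_S col_Sm_1 col_Sm_S (row I y) (m - 1)
    (fun i Hi => row_two_cols I y m Sm_le fixed_point_supp i Hi) ltac:(lia)) as HW.
  replace (S (m - 1)) with m in HW by lia. fold (wsum I y (m - 1)) (col y m) in HW.
  pose proof (mass_two_cols I y m Sm_le fixed_point_supp) as Hmass.
  unfold col at 2 in Hmass. rewrite rsum_last, col_Sm_diag in Hmass by lia.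
  pose proof rsum_col_m_pred as Hpred.
  assert (r * col y m = r * rsum 0 (m - 1) u + r * y m m) by (rewrite Hpred; ring).
  lra.
Qed.

Lemma fixed_point_rate_balance : rate_balance a (y 0%nat m) (y 0%nat (S m)) m r.
Proof.
  unfold rate_balance.
  rewrite <- (v_succ_add_u a r u v m col_m_1 col_m_S col_Sm_1 col_Sm_S m) by lia.
  pose proof (u_succ_rsum a r u m col_m_1 col_m_S (m - 1) ltac:(lia)) as Hum.
  rewrite (rsum_u_pow a r u m col_m_1 col_m_S) in Hum by lia.
  replace (S (m - 1)) with m in Hum by lia. cbv beta in Hum.
  rewrite col_Sm_diag, Hum. ring.
Qed.

Lemma col_m_useq i : (i <= m)%nat -> y i m = useq a r (y 0%nat m) i.
Proof. exact (useq_unique a r u m col_m_1 col_m_S i). Qed.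

Lemma col_Sm_vseq i : (i <= S m)%nat -> y i (S m) = vseq a r (y 0%nat m) (y 0%nat (S m)) i.
Proof. exact (vseq_unique a r u v m col_Sm_1 col_Sm_S col_m_useq i). Qed.

End Interior.

Lemma fixed_point_row0_pos : 0 < y 0%nat m.
Proof.
  destruct (Nat.eq_dec m 0) as [Hm|Hm]; [|apply row0_pos_interior; lia].
  pose proof col_m_pos as Hc. unfold col in Hc. rewrite Hm, rsum_single in Hc. rewrite Hm. exact Hc.
Qed.

Lemma fixed_point_row0_sum : y 0%nat m + y 0%nat (S m) = 1 - lam.
Proof.
  destruct (Nat.eq_dec m 0) as [Hm|Hm]; [|apply row0_sum_interior; lia].
  rewrite Hm. apply first_col_row0_sum, Hm.
Qed.

Lemma fixed_point_row0_pow : (1 + a) ^ m * (y 0%nat m + (1 + a) * y 0%nat (S m)) = 1.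
Proof.
  destruct (Nat.eq_dec m 0) as [Hm|Hm]; [|apply row0_pow_interior; lia].
  rewrite Hm, pow_O, Rmult_1_l. apply first_col_row0_pow, Hm.
Qed.

Lemma fixed_point_threshold : threshold lam d m.
Proof.
  apply (threshold_of_row0 lam d m (y 0%nat m) (y 0%nat (S m))).
  - exact a_pos.
  - exact fixed_point_row0_pos.
  - apply y_nonneg. lia.
  - exact fixed_point_row0_sum.
  - exact fixed_point_row0_pow.
Qed.

Lemma fixed_point_two_col_state i j : (i <= j <= I)%nat ->
  y i j = two_col_state a (rate lam d I y m) (y 0%nat m) (y 0%nat (S m)) m i j.
Proof.
  intros Hij. unfold two_col_state.
  destruct (Nat.eqb_spec j m) as [->|Hjm]; [rewrite (proj2 (Nat.leb_le i m)) by lia|].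
  - destruct (Nat.eq_dec m 0) as [Hm|Hm]; [|apply col_m_useq; lia].
    replace i with 0%nat by lia. reflexivity.
  - destruct (Nat.eqb_spec j (S m)) as [->|HjSm]; [rewrite (proj2 (Nat.leb_le i (S m))) by lia|].
    + destruct (Nat.eq_dec m 0) as [Hm|Hm]; [|apply col_Sm_vseq; lia].
      destruct i as [|[|i]]; [reflexivity | | lia].
      exact col_Sm_1.
    + apply fixed_point_supp; assumption.
Qed.
End Inner.

Lemma leading_col_eq J : threshold lam d J -> (J < I)%nat -> m = J.
Proof.
  intros HJ HJI. destruct (Nat.eq_dec m I) as [HmI|HmI].
  - pose proof (fixed_point_last_col ltac:(lia) HmI).
    pose proof (threshold_pow_gt lam d J I lam_range ltac:(lia) HJ HJI). lra.
  - apply (threshold_unique lam d); [exact lam_range | lia | | exact HJ].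
    apply fixed_point_threshold. lia.
Qed.

Lemma fixed_point_eq_star J r : threshold lam d J -> (J < I)%nat -> 0 <= r ->
  rate_balance a (u0_star lam d J) (v0_star lam d J) J r ->
  forall i j, (i <= j <= I)%nat ->
  y i j = two_col_state a r (u0_star lam d J) (v0_star lam d J) J i j.
Proof.
  intros HJ HJI Hr Hbal i j Hij.
  pose proof (leading_col_eq J HJ HJI) as HmJ. subst J.
  assert (Sm_le : (S m <= I)%nat) by lia.
  destruct (row0_star_unique lam d m (proj1 lam_range) ltac:(lia) (y 0%nat m) (y 0%nat (S m))
    (fixed_point_row0_sum Sm_le) (fixed_point_row0_pow Sm_le)) as [Hu0 Hv0].
  rewrite (fixed_point_two_col_state Sm_le i j Hij), Hu0, Hv0.
  destruct (Nat.eq_dec m 0) as [Hm|Hm]; [rewrite Hm; apply two_col_state_0_rate|].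
  f_equal. pose proof (fixed_point_rate_balance Sm_le ltac:(lia)) as Hb. rewrite Hu0, Hv0 in Hb.
  apply (rate_balance_unique a (u0_star lam d m) (v0_star lam d m) m); try assumption.
  - apply (row0_star_pos lam d m (proj1 lam_range) ltac:(lia) HJ).
  - apply rate_nonneg.
Qed.

End FixedPoint.
End LeadingColumn.

Section Candidate.
Variables (lam : R) (d I m : nat) (u0 v0 r : R).
Hypothesis lam_pos : 0 < lam.
Hypothesis d_pos : (0 < d)%nat.
Hypothesis Sm_le : (S m <= I)%nat.
Hypothesis u0_pos : 0 < u0.
Hypothesis v0_nonneg : 0 <= v0.
Hypothesis r_nonneg : 0 <= r.
Hypothesis row0_sum : u0 + v0 = 1 - lam.
Hypothesis row0_pow : (1 + lam * INR d) ^ m * (u0 + (1 + lam * INR d) * v0) = 1.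
Hypothesis balance : rate_balance (lam * INR d) u0 v0 m r.

Local Notation a := (lam * INR d).
Local Notation u := (useq a r u0).
Local Notation v := (vseq a r u0 v0).
Local Notation xs := (two_col_state a r u0 v0 m).

Let a_pos : 0 < a := lam_d_pos lam d lam_pos ltac:(lia).
Let u_1 : u 1%nat = (a + r) * u 0%nat := eq_refl.
Let u_S i (Hi : (1 <= i <= m - 1)%nat) : u (S i) = (1 + a + r) * u i := useq_S a r u0 i (proj1 Hi).
Let v_1 : v 1%nat = a * v 0%nat := eq_refl.
Let v_S i (Hi : (1 <= i <= m)%nat) : v (S i) = (1 + a) * v i - r * u (i - 1)%nat :=
  vseq_S a r u0 v0 i (proj1 Hi).
Let xs_supp i j (Hij : (i <= j <= I)%nat) : j <> m -> j <> S m -> xs i j = 0 :=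
  two_col_state_other a r u0 v0 m i j.

Lemma useq_pos i : 0 < u i.
Proof.
  induction i as [|[|i] IH]; [exact u0_pos | simpl; nra |].
  rewrite useq_S by lia. nra.
Qed.

Lemma candidate_col_m : col xs m = rsum 0 m u.
Proof. apply rsum_ext. intros. apply two_col_state_col_m. lia. Qed.

Lemma candidate_col_m_pos : 0 < col xs m.
Proof.
  rewrite candidate_col_m. pose proof (useq_pos 0).
  pose proof (rsum_ge_term 0 m u 0 (fun k _ => Rlt_le _ _ (useq_pos k)) ltac:(lia)). lra.
Qed.

Lemma candidate_col_lt_m j : (j < m)%nat -> col xs j = 0.
Proof. intros Hj. apply rsum_eq_0. intros. apply two_col_state_other; lia. Qed.

Lemma candidate_mass : rsum 0 I (row I xs) = 1.
Proof.
  rewrite (mass_two_cols I xs m Sm_le xs_supp), candidate_col_m.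
  unfold col. rewrite (rsum_ext 0 (S m) _ v) by (intros; apply two_col_state_col_Sm; lia).
  rewrite (rsum_u_v_pow a r u v m u_1 u_S v_1 v_S m) by lia. exact row0_pow.
Qed.

Lemma candidate_row i : (i <= m)%nat -> row I xs i = u i + v i.
Proof.
  intros Hi. rewrite (row_two_cols I xs m Sm_le xs_supp i Hi).
  rewrite two_col_state_col_m, two_col_state_col_Sm by lia. reflexivity.
Qed.

Section Interior.
Hypothesis m_ge_1 : (1 <= m)%nat.

Lemma useq_m : u m = (a + r) * (1 + a + r) ^ (m - 1) * u0.
Proof.
  pose proof (u_succ_rsum a r u m u_1 u_S (m - 1) ltac:(lia)) as Hum.
  rewrite (rsum_u_pow a r u m u_1 u_S) in Hum by lia.
  replace (S (m - 1)) with m in Hum by lia. rewrite Hum. simpl. ring.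
Qed.

Lemma vseq_Sm : v (S m) = r * u m.
Proof.
  pose proof (v_succ_add_u a r u v m u_1 u_S v_1 v_S m ltac:(lia)) as H.
  change (u 0%nat) with u0 in H. change (v 0%nat) with v0 in H.
  unfold rate_balance in balance. rewrite <- useq_m in balance. lra.
Qed.

(* by [v_succ_add_u], this says [v (S k) >= 0] *)
Lemma useq_le k : (1 <= k <= m)%nat -> u k <= a * (1 + a) ^ (k - 1) * (u0 + (1 + a) * v0).
Proof.
  intros Hk. replace k with (m - (m - k))%nat by lia.
  assert (Ht : (m - k <= m - 1)%nat) by lia. revert Ht.
  induction (m - k)%nat as [|t IH]; intros Ht.
  - rewrite Nat.sub_0_r. unfold rate_balance in balance. rewrite <- balance, <- useq_m.
    pose proof (useq_pos m). nra.
  - specialize (IH ltac:(lia)). replace (m - t)%nat with (S (m - S t)) in IH by lia.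
    rewrite u_S in IH by lia. replace (S (m - S t) - 1)%nat with (S (m - S t - 1)) in IH by lia.
    simpl pow in IH. pose proof (useq_pos (m - S t)).
    assert (0 <= a * (1 + a) ^ (m - S t - 1) * (u0 + (1 + a) * v0)).
    { apply Rmult_le_pos; [apply Rmult_le_pos; [lra | apply pow_le; lra] | nra]. }
    nra.
Qed.
End Interior.

Lemma vseq_nonneg i : (i <= S m)%nat -> 0 <= v i.
Proof.
  intros Hi. destruct i as [|[|i]]; [exact v0_nonneg | simpl; nra |].
  pose proof (v_succ_add_u a r u v m u_1 u_S v_1 v_S (S i) ltac:(lia)) as H.
  change (u 0%nat) with u0 in H. change (v 0%nat) with v0 in H.
  pose proof (useq_le ltac:(lia) (S i) ltac:(lia)). lra.
Qed.

Lemma candidate_nonneg i j : (i <= j <= I)%nat -> 0 <= xs i j.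
Proof.
  intros Hij. unfold two_col_state.
  destruct (j =? m)%nat; [destruct (i <=? m)%nat; [apply Rlt_le, useq_pos | lra]|].
  destruct (j =? S m)%nat; [|lra].
  destruct (i <=? S m)%nat eqn:Hi; [apply vseq_nonneg, Nat.leb_le, Hi | lra].
Qed.

Let m_le : (m <= I)%nat := Nat.lt_le_incl _ _ Sm_le.
Let entry_xs_lt_m := entry_lt_m I xs m candidate_nonneg m_le candidate_col_lt_m.
Let csum_xs_lt_m := csum_lt_m I xs m m_le candidate_col_lt_m.
Let Rj_xs_ge_m := Rj_ge_m lam d I xs m candidate_nonneg m_le candidate_col_m_pos.
Let Gj_xs_ge_m := Gj_ge_m lam d I xs m candidate_nonneg m_le candidate_col_m_pos.
Let rho_xs_ge_m := rho_ge_m lam d I xs m candidate_nonneg m_le candidate_col_m_pos.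
Let rho_xs_lt_m := rho_lt_m lam d I xs m candidate_col_lt_m.
Let rho_xs_col_m := rho_col_m lam d I xs m candidate_col_m_pos.

Lemma candidate_row_Sm : row I xs (S m) = v (S m).
Proof. rewrite (row_succ_two_cols I xs m Sm_le xs_supp). apply two_col_state_col_Sm. lia. Qed.

Lemma candidate_drift_beyond i j : (i <= j <= I)%nat -> (S m < j)%nat -> drift lam d I xs i j = 0.
Proof.
  intros Hij Hj. destruct (Nat.eq_dec i j) as [->|Hne].
  - destruct (Nat.eq_dec j I) as [->|HjI].
    + rewrite drift_II, !rho_xs_ge_m, Gj_xs_ge_m, two_col_state_other by lia. ring.
    + rewrite drift_diag, !rho_xs_ge_m, !Gj_xs_ge_m, two_col_state_other by lia.
      rewrite (row_beyond_two_cols I xs m Sm_le xs_supp) by lia. ring.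
  - rewrite drift_lt, !rho_xs_ge_m, !two_col_state_other by lia. ring.
Qed.

Lemma candidate_drift_first i j : m = 0%nat -> (i <= j <= 1)%nat -> drift lam d I xs i j = 0.
Proof.
  intros Hm Hij. pose proof row0_pow as Hpow. rewrite Hm in Hpow. simpl in Hpow.
  destruct j as [|[|j]]; [| |lia].
  - replace i with 0%nat by lia.
    rewrite drift_00, Rj_xs_ge_m, (candidate_row 0) by lia.
    rewrite Hm. unfold two_col_state. simpl. lra.
  - destruct i as [|[|i]]; [| |lia].
    + rewrite drift_lt, rho_xs_ge_m, andb_false_r by lia.
      rewrite Hm. unfold two_col_state. simpl. lra.
    + pose proof candidate_row_Sm as Hrow. rewrite Hm in Hrow.
      rewrite drift_11, Rj_xs_ge_m, rho_xs_ge_m, Gj_xs_ge_m by lia.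
      rewrite Hm, Hrow. unfold two_col_state. simpl. lra.
Qed.

Section InteriorDrift.
Hypothesis m_ge_1 : (1 <= m)%nat.

Lemma candidate_wsum : a * wsum I xs (m - 1) = lam - r * rsum 0 m u.
Proof.
  unfold wsum.
  rewrite (weighted_rsum_u_v a r u v m u_1 u_S v_1 v_S (row I xs) (m - 1) candidate_row) by lia.
  replace (S (m - 1)) with m by lia.
  pose proof (rsum_u_v_pow a r u v m u_1 u_S v_1 v_S m ltac:(lia)) as Hmass.
  change (u 0%nat) with u0 in Hmass |- *. change (v 0%nat) with v0 in Hmass |- *.
  rewrite row0_pow, (rsum_last 0 m v), vseq_Sm in Hmass by lia.
  pose proof (rsum_last 0 (m - 1) u ltac:(lia)) as HUm. replace (S (m - 1)) with m in HUm by lia.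
  assert (r * rsum 0 m u = r * rsum 0 (m - 1) u + r * u m) by (rewrite HUm; ring).
  lra.
Qed.

Lemma candidate_d_wsum_le k : (k <= m - 1)%nat -> INR d * wsum I xs k <= 1.
Proof.
  intros Hk. pose proof (wsum_le I xs k (m - 1) candidate_nonneg Hk). pose proof candidate_wsum.
  assert (0 <= r * rsum 0 m u).
  { apply Rmult_le_pos; [lra | apply rsum_nonneg; intros; apply Rlt_le, useq_pos]. }
  assert (0 <= wsum I xs k).
  { apply rsum_nonneg. intros.
    apply Rmult_le_pos; [apply pos_INR | apply (row_nonneg I), candidate_nonneg]. }
  assert (Hlam : lam * (INR d * wsum I xs k) <= lam * 1) by nra.
  apply Rmult_le_reg_l in Hlam; lra.
Qed.

Lemma Rj_candidate_lt_m k : (k <= m - 1)%nat -> Rj lam d I xs k = lam - a * wsum I xs k.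
Proof.
  intros Hk. rewrite Rj_csum_0 by (apply csum_xs_lt_m; lia).
  pose proof (candidate_d_wsum_le k Hk). rewrite Rmax_right; nra.
Qed.

Lemma Gj_candidate_lt_m k : (1 <= k <= m - 1)%nat -> Gj lam d I xs k = a * rsum 0 k (row I xs).
Proof.
  intros Hk.
  rewrite Gj_csum_0, isle_true by (try apply csum_xs_lt_m; try apply candidate_d_wsum_le; lia).
  simpl. ring.
Qed.

Lemma rate_candidate : rate lam d I xs m = r.
Proof.
  pose proof candidate_col_m_pos as Hpos.
  unfold rate. rewrite Rj_candidate_lt_m, candidate_wsum by lia.
  rewrite candidate_col_m in Hpos |- *.
  field. lra.
Qed.

Lemma candidate_diag_balance : (1 + r) * u m = a * (v m + rsum 0 (m - 1) (row I xs)).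
Proof.
  rewrite (rsum_ext 0 (m - 1) (row I xs) (fun i => u i + v i))
    by (intros; apply candidate_row; lia).
  rewrite rsum_plus.
  pose proof (u_succ_rsum a r u m u_1 u_S (m - 1) ltac:(lia)) as Hu.
  replace (S (m - 1)) with m in Hu by lia.
  pose proof (v_succ_rsum a r u v m v_1 v_S m ltac:(lia)) as Hv. rewrite vseq_Sm in Hv by lia.
  pose proof (rsum_last 0 (m - 1) v ltac:(lia)) as HVm. replace (S (m - 1)) with m in HVm by lia.
  rewrite HVm in Hv. rewrite Hu in Hv |- *. lra.
Qed.

Lemma candidate_drift_lt_m i j : (i <= j < m)%nat -> drift lam d I xs i j = 0.
Proof.
  intros Hij. destruct (Nat.eq_dec i j) as [<-|Hne].
  - destruct i as [|[|i]].
    + rewrite drift_00, entry_xs_lt_m, Rj_candidate_lt_m by lia.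
      unfold wsum. rewrite rsum_single. simpl. ring.
    + rewrite drift_11, entry_xs_lt_m, rho_xs_lt_m, Rj_candidate_lt_m, Gj_candidate_lt_m by lia.
      unfold wsum. rewrite rsum_last, !rsum_single by lia. simpl. ring.
    + rewrite drift_diag, entry_xs_lt_m, !rho_xs_lt_m, !Gj_candidate_lt_m by lia.
      replace (S (S i) - 1)%nat with (S i) by lia. rewrite (rsum_last 0 (S i)) by lia. ring.
  - rewrite drift_lt, !entry_xs_lt_m, !rho_xs_lt_m by lia.
    replace (j =? I)%nat with false by (symmetry; apply Nat.eqb_neq; lia). simpl. ring.
Qed.

Lemma candidate_drift_diag_m : drift lam d I xs m m = 0.
Proof.
  pose proof candidate_diag_balance as Hb.
  destruct (Nat.eq_dec m 1) as [Hm|Hm].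
  (* [b_(1,1)] has its own shape; rewrite [m] to [1] only in the indices, not inside [xs] *)
  - replace (m - 1)%nat with 0%nat in Hb by lia.
    rewrite rsum_single, candidate_row in Hb by lia.
    replace (drift lam d I xs m m) with (drift lam d I xs 1 1) by (rewrite Hm; reflexivity).
    rewrite drift_11, Rj_candidate_lt_m, Gj_xs_ge_m, !candidate_row by lia.
    replace (rho lam d I xs 0 1 1) with (rho lam d I xs (m - 1) 1 m) by (rewrite Hm; reflexivity).
    replace (xs 1%nat 1%nat) with (xs 1%nat m) by (rewrite Hm; reflexivity).
    rewrite rho_xs_col_m, rate_candidate, two_col_state_col_m by lia.
    unfold wsum. rewrite rsum_single, candidate_row by lia. rewrite Hm in Hb. simpl in Hb |- *. lra.
  - rewrite drift_diag, rho_xs_col_m, rate_candidate, rho_xs_lt_m, Gj_candidate_lt_m, Gj_xs_ge_m,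
      candidate_row, two_col_state_col_m by lia.
    lra.
Qed.

Lemma candidate_drift_col_m i : (i < m)%nat -> drift lam d I xs i m = 0.
Proof.
  intros Hi. rewrite drift_lt, rho_xs_col_m, rate_candidate, !two_col_state_col_m by lia.
  destruct i as [|i].
  - rewrite andb_false_r. simpl. ring.
  - rewrite rho_xs_lt_m, useq_S by lia.
    replace (m =? I)%nat with false by (symmetry; apply Nat.eqb_neq; lia). simpl. ring.
Qed.

Lemma candidate_drift_diag_Sm : drift lam d I xs (S m) (S m) = 0.
Proof.
  destruct (Nat.eq_dec (S m) I) as [HI|HI].
  - replace (drift lam d I xs (S m) (S m)) with (drift lam d I xs I I) by (rewrite HI; reflexivity).
    rewrite drift_II by lia.
    replace (I - 2)%nat with (m - 1)%nat by lia. replace (I - 1)%nat with m by lia.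
    replace (xs I I) with (xs (S m) (S m)) by (rewrite HI; reflexivity).
    rewrite rho_xs_col_m, rate_candidate, Gj_xs_ge_m, (rho_xs_ge_m m), two_col_state_col_m,
      two_col_state_col_Sm, vseq_Sm by lia.
    ring.
  - rewrite drift_diag, candidate_row_Sm by lia.
    replace (S m - 2)%nat with (m - 1)%nat by lia. replace (S m - 1)%nat with m by lia.
    rewrite rho_xs_col_m, rate_candidate, (rho_xs_ge_m m), !Gj_xs_ge_m, two_col_state_col_m,
      two_col_state_col_Sm, vseq_Sm by lia.
    ring.
Qed.

Lemma candidate_drift_col_Sm i : (i < S m)%nat -> drift lam d I xs i (S m) = 0.
Proof.
  intros Hi. rewrite drift_lt, (rho_xs_ge_m (S m - 1)), (rho_xs_ge_m (I - 1)), !two_col_state_col_Sm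
    by lia.
  destruct i as [|i].
  - rewrite andb_false_r. simpl. ring.
  - replace (S m - 2)%nat with (m - 1)%nat by lia. replace (S m - 1)%nat with m by lia.
    rewrite rho_xs_col_m, rate_candidate, two_col_state_col_m, vseq_S by lia.
    simpl. rewrite Nat.sub_0_r. ring.
Qed.
End InteriorDrift.

Lemma candidate_fixed_point : fixed_point lam d I xs.
Proof.
  split; [split; [exact candidate_nonneg | exact candidate_mass]|].
  intros i j Hij.
  destruct (le_lt_dec j (S m)) as [Hj|Hj]; [|apply candidate_drift_beyond; lia].
  destruct (Nat.eq_dec m 0) as [Hm|Hm]; [apply candidate_drift_first; lia|].
  destruct (lt_eq_lt_dec j m) as [[Hjm|Hjm]|Hjm].
  - apply candidate_drift_lt_m; lia.
  - subst j. destruct (Nat.eq_dec i m) as [->|Hne];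
      [apply candidate_drift_diag_m | apply candidate_drift_col_m]; lia.
  - replace j with (S m) by lia.
    destruct (Nat.eq_dec i (S m)) as [->|Hne];
      [apply candidate_drift_diag_Sm | apply candidate_drift_col_Sm]; lia.
Qed.
End Candidate.

Lemma fixed_point_unique lam d I J r (y : state) :
  0 < lam < 1 -> (0 < d)%nat -> threshold lam d J -> (J < I)%nat -> 0 <= r ->
  rate_balance (lam * INR d) (u0_star lam d J) (v0_star lam d J) J r ->
  fixed_point lam d I y -> forall i j, (i <= j <= I)%nat ->
  y i j = two_col_state (lam * INR d) r (u0_star lam d J) (v0_star lam d J) J i j.
Proof.
  intros Hlam Hd HJ HJI Hr Hbal [[Hnn Hmass] Hdrift].
  destruct (leading_col_exists I y Hnn Hmass) as [m [Hm [Hpos Hlt]]].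
  exact (fixed_point_eq_star lam d I y m Hnn Hm Hpos Hlt Hlam Hd Hdrift Hmass J r HJ HJI Hr Hbal).
Qed.

Lemma star_fixed_point lam d I J r :
  0 < lam < 1 -> (0 < d)%nat -> threshold lam d J -> (J < I)%nat -> 0 <= r ->
  rate_balance (lam * INR d) (u0_star lam d J) (v0_star lam d J) J r ->
  fixed_point lam d I (two_col_state (lam * INR d) r (u0_star lam d J) (v0_star lam d J) J).
Proof.
  intros Hlam Hd HJ HJI Hr Hbal.
  destruct (row0_star_pos lam d J (proj1 Hlam) ltac:(lia) HJ) as [Hu0 Hv0].
  apply candidate_fixed_point; try assumption.
  - lra.
  - unfold u0_star. ring.
  - apply row0_star_pow; [lra | lia].
Qed.

Theorem theorem2 (lam : R) (d I : nat)
  (Hlam : 0 < lam < 1) (Hd : (2 <= d)%nat) (HI : (1 < I)%nat)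
  (HIj : (jstar lam d < I)%nat) :
  exists xs : state,
    fixed_point lam d I xs /\
    (forall y : state, fixed_point lam d I y ->
       forall i j : nat, (i <= j <= I)%nat -> y i j = xs i j) /\
    col xs (jstar lam d) + col xs (S (jstar lam d)) = 1 /\
    (forall i j : nat, (i <= j <= I)%nat ->
       j <> jstar lam d -> j <> S (jstar lam d) -> xs i j = 0) /\
    lam * INR d * xs 0%nat (jstar lam d) =
      (1 + lam * INR d) * (1 - lam) - 1 / (1 + lam * INR d) ^ (jstar lam d) /\
    xs 0%nat (jstar lam d) + xs 0%nat (S (jstar lam d)) = 1 - lam.
Proof.
  pose proof (jstar_threshold lam d Hlam ltac:(lia)) as HJ. set (J := jstar lam d) in *.
  destruct (row0_star_pos lam d J (proj1 Hlam) ltac:(lia) HJ) as [Hu0 Hv0].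
  destruct (rate_balance_solvable (lam * INR d) (u0_star lam d J) (v0_star lam d J) J
    (lam_d_pos lam d (proj1 Hlam) ltac:(lia)) Hu0 Hv0) as [r [Hr Hbal]].
  pose proof (star_fixed_point lam d I J r Hlam ltac:(lia) HJ HIj Hr Hbal) as Hfp.
  exists (two_col_state (lam * INR d) r (u0_star lam d J) (v0_star lam d J) J).
  split; [exact Hfp|].
  split; [exact (fun y => fixed_point_unique lam d I J r y Hlam ltac:(lia) HJ HIj Hr Hbal)|].
  rewrite two_col_state_col_m, two_col_state_col_Sm by lia. simpl.
  repeat split.
  - rewrite <- (mass_two_cols I _ J HIj); [exact (proj2 (proj1 Hfp)) |].
    intros i j _. apply two_col_state_other.
  - intros i j _. apply two_col_state_other.
  - apply a_u0_star; [lra | lia].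
  - unfold u0_star. ring.
Qed.
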